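(* Let $V$ be a set of interpretations over $A$. (1) For each ADF $D$ such that $\mathrm{mod}(D)=V$, there is a mod-characterization $f_D$ for $V$; (2) vice versa, for each mod-characterization $f:\mathcal{V}_2\to\mathcal{V}_2$ for $V$ we find $\mathrm{mod}(D_f)=V$.
   Context: Let $A$ be a fixed finite set of statements. An interpretation is a mapping $v:A\to\{\mathbf{t},\mathbf{f},\mathbf{u}\}$; $\mathcal{V}$ is the set of all interpretations and $\mathcal{V}_2$ the set of two-valued ones (never assigning $\mathbf{u}$). The information ordering is $\mathbf{u}<_i\mathbf{t}$, $\mathbf{u}<_i\mathbf{f}$, extended pointwise. For $v\in\mathcal{V}$, $[v]_2$ is the set of two-valued interpretations $w$ with $v\leq_i w$. An ADF is $D=(A,L,C)$ where each statement $a$ has an acceptance formula $\varphi_a$ over its parents. The operator $\Gamma_D$ maps $v$ to the interpretation assigning to each $a$ the greatest lower bound w.r.t. $\leq_i$ (consensus: $\mathbf{t}$ if all are $\mathbf{t}$, $\mathbf{f}$ if all are $\mathbf{f}$, otherwise $\mathbf{u}$) of $\{w(\varphi_a)\mid w\in[v]_2\}$. $v$ is a two-valued model of $D$ iff $v$ is two-valued and $\Gamma_D(v)=v$ (equivalently $v(a)=v(\varphi_a)$ for all $a$); $\mathrm{mod}(D)$ is the set of two-valued models. A function $f:\mathcal{V}_2\to\mathcal{V}_2$ is a mod-characterization of $V$ iff (1) $V\subseteq\mathcal{V}_2$ and (2) for each $v\in\mathcal{V}_2$, $v\in V$ iff $f(v)=v$. For $f:\mathcal{V}_2\to\mathcal{V}_2$,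 $D_f$ is the ADF whose acceptance formula for each $a$ is $\varphi^f_a=\bigvee_{w\in\mathcal{V}_2,\,f(w)(a)=\mathbf{t}}\phi_w$ with $\phi_w=\bigwedge_{w(a')=\mathbf{t}}a'\wedge\bigwedge_{w(a')=\mathbf{f}}\neg a'$. *)

From HB Require Import structures.
From mathcomp Require Import all_boot.
Set Implicit Arguments. Unset Strict Implicit. Unset Printing Implicit Defensive.

Inductive tv := Tt | Ff | Uu.
Definition tv_eqb (x y : tv) : bool :=
  match x, y with Tt, Tt | Ff, Ff | Uu, Uu => true | _, _ => false end.
Lemma tv_eqP : Equality.axiom tv_eqb.
Proof. by case; case; constructor. Qed.
Definition tv_enc (x : tv) : 'I_3 :=
  match x with Tt => inord 0 | Ff => inord 1 | Uu => inord 2 end.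
Definition tv_dec (i : 'I_3) : tv :=
  match val i with 0 => Tt | 1 => Ff | _ => Uu end.
Lemma tv_encK : cancel tv_enc tv_dec.
Proof. by case; rewrite /tv_dec /= inordK. Qed.
HB.instance Definition _ := Finite.copy tv (can_type tv_encK).

Definition le_i (x y : tv) : bool := (x == Uu) || (x == y).

Section ADF.
Variable A : finType.

Definition interp := {ffun A -> tv}.
HB.instance Definition _ := Finite.on interp.
Definition two_valued (v : interp) : bool := [forall a, v a != Uu].
Definition interp2 := {v : interp | two_valued v}.
HB.instance Definition _ := Finite.on interp2.
Definition le_info (v w : interp) : bool := [forall a, le_i (v a) (w a)].

Inductive formula :=
| FVar of A | FTop | FBot | FNeg of formula
| FAnd of formula & formula | FOr of formula & formula.

Fixpoint fvars (p : formula) : seq A :=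
  match p with
  | FVar a => [:: a]
  | FTop | FBot => [::]
  | FNeg q => fvars q
  | FAnd q r | FOr q r => fvars q ++ fvars r
  end.

Fixpoint feval (w : interp) (p : formula) : bool :=
  match p with
  | FVar a => w a == Tt
  | FTop => true
  | FBot => false
  | FNeg q => ~~ feval w q
  | FAnd q r => feval w q && feval w r
  | FOr q r => feval w q || feval w r
  end.

Record ADF := mkADF {
  links : rel A;                     (* links b a : b is a parent of a *)
  acc : A -> formula;
  acc_wf : forall a b, b \in fvars (acc a) -> links b a
}.

Definition completions (v : interp) : seq interp :=
  [seq w <- map val (enum {: interp2}) | le_info v w].

(* consensus (glb wrt <=_i) of a list of two-valued truth values *)
Definition consensus (s : seq bool) : tv :=
  if all id s then Tt else if all negb s then Ff else Uu.

Definition Gamma (D : ADF) (v : interp) : interp :=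
  [ffun a => consensus [seq feval w (acc D a) | w <- completions v]].

Definition is_model (D : ADF) (v : interp) : bool :=
  two_valued v && (Gamma D v == v).

Definition models (D : ADF) : {set interp} := [set v | is_model D v].

Definition mod_char (V : {set interp}) (f : interp2 -> interp2) : Prop :=
  (forall v, v \in V -> two_valued v) /\
  (forall v : interp2, (val v \in V) <-> f v = v).

Definition phi_w (w : interp) : formula :=
  foldr FAnd FTop
    [seq (if w a == Tt then FVar a else FNeg (FVar a))
       | a <- enum A & w a != Uu].

Definition acc_f (f : interp2 -> interp2) (a : A) : formula :=
  foldr FOr FBot [seq phi_w (val w) | w <- enum {: interp2} & val (f w) a == Tt].

Definition D_f (f : interp2 -> interp2) : ADF :=
  @mkADF (fun _ _ => true) (acc_f f) (fun _ _ _ => erefl).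

End ADF.

(* On a two-valued interpretation v the only completion is v itself, so
   Gamma_D v is simply the interpretation a |-> v(phi_a), again two-valued.
   Hence Gamma_D restricted to V_2 is a mod-characterization of mod(D).
   Conversely, phi_w holds exactly at w, so v(phi^f_a) = f(v)(a): the operator
   of D_f restricted to V_2 is f itself, and a mod-characterization
   determines the set it characterizes. *)

From mathcomp Require Import all_boot.
Set Implicit Arguments. Unset Strict Implicit.

Lemma tv_eqE (x y : tv) : (x == y) = tv_eqb x y.
Proof. exact/eqP/tv_eqP. Qed.

Definition tv_of_bool (b : bool) : tv := if b then Tt else Ff.

Lemma tv_of_bool_neqU b : tv_of_bool b != Uu.
Proof. by rewrite tv_eqE; case: b. Qed.

Lemma tv_of_bool_eqT x : x != Uu -> tv_of_bool (x == Tt) = x.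
Proof. by rewrite !tv_eqE; case: x. Qed.

Lemma tv_eqT_inj x y : x != Uu -> y != Uu -> (x == Tt) = (y == Tt) -> x = y.
Proof. by rewrite !tv_eqE; case: x; case: y. Qed.

Section Interpretations.
Variable A : finType.
Implicit Types (v w : interp A) (V : {set interp A}).

Lemma two_valuedP v : reflect (forall a, v a != Uu) (two_valued v).
Proof. exact: forallP. Qed.

Lemma le_info_two_valued v w : two_valued v -> le_info v w = (v == w).
Proof.
move/two_valuedP=> v2; apply/forallP/eqP => [le_vw | <- a].
  by apply/ffunP => a; move: (le_vw a); rewrite /le_i (negbTE (v2 a)) => /eqP.
by rewrite /le_i eqxx orbT.
Qed.

Lemma completions_two_valued v : two_valued v -> completions v = [:: v].
Proof.
move=> v2; rewrite /completions.
rewrite (@eq_filter _ _ (pred1 v)) => [|w]; last by rewrite /= eq_sym le_info_two_valued.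
apply: filter_pred1_uniq; first by rewrite map_inj_uniq ?enum_uniq //; apply: val_inj.
by apply/mapP; exists (exist _ v v2); rewrite ?mem_enum.
Qed.

Lemma Gamma_two_valued (D : ADF A) v a :
  two_valued v -> Gamma D v a = tv_of_bool (feval v (acc D a)).
Proof.
move=> v2; rewrite /Gamma ffunE completions_two_valued //.
by rewrite /consensus /=; case: (feval _ _).
Qed.

Lemma Gamma_two_valued_two_valued (D : ADF A) v :
  two_valued v -> two_valued (Gamma D v).
Proof.
by move=> v2; apply/two_valuedP => a; rewrite Gamma_two_valued ?tv_of_bool_neqU.
Qed.

Definition Gamma2 (D : ADF A) (v : interp2 A) : interp2 A :=
  exist _ (Gamma D (val v)) (Gamma_two_valued_two_valued D (valP v)).

Lemma mod_char_models (D : ADF A) : mod_char (models D) (Gamma2 D).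
Proof.
split=> [v | v]; first by rewrite inE => /andP[].
rewrite inE /is_model (valP v); split=> [/eqP Gv | /(congr1 val) /= ->//].
exact: val_inj.
Qed.

Lemma eq_mod_char V (f g : interp2 A -> interp2 A) :
  f =1 g -> mod_char V f -> mod_char V g.
Proof. by move=> fg [V2 fV]; split=> // v; rewrite -fg. Qed.

Lemma mod_char_inj V V' (f : interp2 A -> interp2 A) :
  mod_char V f -> mod_char V' f -> V = V'.
Proof.
move=> [V2 fV] [V2' fV']; apply/setP => v.
have [v2 | /negP v2] := boolP (two_valued v).
  have [fV_v fV'_v] := (fV (exist _ v v2), fV' (exist _ v v2)).
  by apply/idP/idP => [/fV_v/fV'_v | /fV'_v/fV_v].
by apply/idP/idP => [/V2 | /V2'].
Qed.

Lemma feval_foldr_and v s :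
  feval v (foldr (@FAnd A) (FTop A) s) = all (feval v) s.
Proof. by elim: s => //= p s ->. Qed.

Lemma feval_foldr_or v s :
  feval v (foldr (@FOr A) (FBot A) s) = has (feval v) s.
Proof. by elim: s => //= p s ->. Qed.

Lemma feval_phi_w v w :
  two_valued v -> two_valued w -> feval v (phi_w w) = (v == w).
Proof.
move=> /two_valuedP v2 /two_valuedP w2.
rewrite /phi_w feval_foldr_and all_map (eq_filter w2) filter_predT.
have literalE a : feval v (if w a == Tt then FVar a else FNeg (FVar a))
                  = ((v a == Tt) == (w a == Tt)).
  by case: ifP => _ /=; case: (v a == Tt).
rewrite (eq_all literalE); apply/allP/eqP => [vw | -> a _]; last exact: eqxx.
apply/ffunP => a; apply: tv_eqT_inj (v2 a) (w2 a) _.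
by have /eqP := vw a (mem_enum _ a).
Qed.

Lemma feval_acc_f (f : interp2 A -> interp2 A) (v : interp2 A) a :
  feval (val v) (acc_f f a) = (val (f v) a == Tt).
Proof.
rewrite /acc_f feval_foldr_or has_map; apply/hasP/idP => [[w] | fva].
  rewrite mem_filter /= feval_phi_w ?valP // => /andP[fwa _] /eqP/val_inj vw.
  by rewrite vw.
exists v; first by rewrite mem_filter fva mem_enum.
by rewrite /= feval_phi_w ?valP.
Qed.

Lemma Gamma2_D_f (f : interp2 A -> interp2 A) : Gamma2 (D_f f) =1 f.
Proof.
move=> v; apply/val_inj/ffunP => a /=.
rewrite Gamma_two_valued ?valP //= feval_acc_f tv_of_bool_eqT //.
exact/two_valuedP/valP.
Qed.

End Interpretations.

Theorem proposition4 (A : finType) (V : {set interp A}) :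
  (forall D : ADF A, models D = V ->
     exists fD : interp2 A -> interp2 A, mod_char V fD) /\
  (forall f : interp2 A -> interp2 A, mod_char V f -> models (D_f f) = V).
Proof.
split=> [D <- | f fV]; first by exists (Gamma2 D); apply: mod_char_models.
apply: (mod_char_inj _ fV).
exact: eq_mod_char (Gamma2_D_f f) (mod_char_models (D_f f)).
Qed.
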